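(* Let $n\ge 2$ be an integer and let $(x_0,y_0),\dots,(x_n,y_n)\in\mathbb{R}^2$ with $a:=x_0<x_1<\dots<x_n=:b$. For each $k\in\{1,\dots,n\}$ fix $d_k\in[0,1)$ and put \[ a_k=\frac{x_k-x_{k-1}}{x_n-x_0},\quad b_k=\frac{x_nx_{k-1}-x_0x_k}{x_n-x_0},\quad c_k=\frac{y_k-y_{k-1}}{x_n-x_0}-d_k\frac{y_n-y_0}{x_n-x_0},\quad e_k=\frac{x_ny_{k-1}-x_0y_k}{x_n-x_0}-d_k\frac{x_ny_0-x_0y_n}{x_n-x_0}, \] and $f_k(x,y)=(a_kx+b_k,\;c_kx+d_ky+e_k)$. Let $\theta=1$ if $c_1=\dots=c_n=0$ and $\theta=\dfrac{1-\max_k a_k}{2\max_k|c_k|}$ otherwise. Let $f:[a,b]\to\mathbb{R}$ be the affine fractal interpolation function associated with these data and $G_f=\{(x,f(x)):x\in[a,b]\}$. For $k\in\{1,\dots,n\}$ set \[ u_k=\frac{b_k}{1-a_k},\qquad v_k=\frac{b_kc_k}{(1-a_k)(1-d_k)}+\frac{e_k}{1-d_k},\qquad s_k=\max\{a_k+\theta|c_k|,\,d_k\}, \] and $M=\max_{i,j\in\{1,\dots,n\}}\left(|u_i-u_j|+\theta|v_i-v_j|\right)$. Let $\sigma$ be a permutation of $\{1,\dots,n\}$ with $s_{\sigma(1)}\le\dots\le s_{\sigma(n)}$, and let $D=1-s_{\sigma(n-1)}s_{\sigma(n)}$. Define \[ A=\min\left\{\min_{1\le j\le n-1}\left(v_{\sigma(j)}-\frac{Ms_{\sigma(j)}(1+s_{\sigma(n)})}{\theta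 D}\right),\ v_{\sigma(n)}-\frac{Ms_{\sigma(n)}(1+s_{\sigma(n-1)})}{\theta D}\right\}, \] \[ B=\max\left\{\max_{1\le j\le n-1}\left(v_{\sigma(j)}+\frac{Ms_{\sigma(j)}(1+s_{\sigma(n)})}{\theta D}\right),\ v_{\sigma(n)}+\frac{Ms_{\sigma(n)}(1+s_{\sigma(n-1)})}{\theta D}\right\}. \] Then $G_f\subseteq[a,b]\times[A,B]$.
   Context: The maps $f_k$ are contractions for the metric $\rho((u_1,v_1),(u_2,v_2))=|u_1-u_2|+\theta|v_1-v_2|$ on $\mathbb{R}^2$, and the attractor of the iterated function system $\{f_1,\dots,f_n\}$ is the unique nonempty compact set $K\subseteq\mathbb{R}^2$ with $K=\bigcup_{k=1}^n f_k(K)$. The affine fractal interpolation function is the continuous function $f:[a,b]\to\mathbb{R}$ with $f(x_k)=y_k$ for all $k\in\{0,\dots,n\}$ whose graph equals this attractor. *)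

From HB Require Import structures.
From mathcomp Require Import all_boot all_order all_algebra.
From mathcomp Require Import all_classical all_reals all_analysis.
Set Implicit Arguments. Unset Strict Implicit. Unset Printing Implicit Defensive.
Import Order.TTheory GRing.Theory Num.Theory numFieldNormedType.Exports.
Local Open Scope ring_scope.
Local Open Scope classical_set_scope.

(* Data: interpolation points (x k, y k), k = 0..n, vertical scalings d k,
   k = 1..n.  Map indices range over 1..n (natural numbers). *)

Definition ak (R : realType) (n : nat) (x : nat -> R) (k : nat) : R :=
  (x k - x k.-1) / (x n - x 0).
Definition bk (R : realType) (n : nat) (x : nat -> R) (k : nat) : R :=
  (x n * x k.-1 - x 0 * x k) / (x n - x 0).
Definition ck (R : realType) (n : nat) (x y d : nat -> R) (k : nat) : R :=
  (y k - y k.-1) / (x n - x 0) - d k * ((y n - y 0) / (x n - x 0)).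
Definition ek (R : realType) (n : nat) (x y d : nat -> R) (k : nat) : R :=
  (x n * y k.-1 - x 0 * y k) / (x n - x 0)
  - d k * ((x n * y 0 - x 0 * y n) / (x n - x 0)).

Definition fmap (R : realType) (n : nat) (x y d : nat -> R) (k : nat)
  (p : R * R) : R * R :=
  (ak n x k * p.1 + bk n x k, ck n x y d k * p.1 + d k * p.2 + ek n x y d k).

Definition theta (R : realType) (n : nat) (x y d : nat -> R) : R :=
  if [forall k : 'I_n, ck n x y d k.+1 == 0] then 1
  else (1 - \big[Num.max/ak n x 1]_(k < n) ak n x k.+1)
       / (2 * \big[Num.max/0]_(k < n) `|ck n x y d k.+1|).

Definition uk (R : realType) (n : nat) (x : nat -> R) (k : nat) : R :=
  bk n x k / (1 - ak n x k).
Definition vk (R : realType) (n : nat) (x y d : nat -> R) (k : nat) : R :=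
  bk n x k * ck n x y d k / ((1 - ak n x k) * (1 - d k))
  + ek n x y d k / (1 - d k).
Definition sk (R : realType) (n : nat) (x y d : nat -> R) (k : nat) : R :=
  Num.max (ak n x k + theta n x y d * `|ck n x y d k|) (d k).

Definition Mconst (R : realType) (n : nat) (x y d : nat -> R) : R :=
  \big[Num.max/0]_(i < n) \big[Num.max/0]_(j < n)
    (`|uk n x i.+1 - uk n x j.+1|
     + theta n x y d * `|vk n x y d i.+1 - vk n x y d j.+1|).

Definition Dconst (R : realType) (n : nat) (x y d : nat -> R)
  (sigma : nat -> nat) : R :=
  1 - sk n x y d (sigma n.-1) * sk n x y d (sigma n).

Definition rad_j (R : realType) (n : nat) (x y d : nat -> R)
  (sigma : nat -> nat) (j : nat) : R :=
  Mconst n x y d * sk n x y d (sigma j) * (1 + sk n x y d (sigma n))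
  / (theta n x y d * Dconst n x y d sigma).
Definition rad_n (R : realType) (n : nat) (x y d : nat -> R)
  (sigma : nat -> nat) : R :=
  Mconst n x y d * sk n x y d (sigma n) * (1 + sk n x y d (sigma n.-1))
  / (theta n x y d * Dconst n x y d sigma).

Definition Aconst (R : realType) (n : nat) (x y d : nat -> R)
  (sigma : nat -> nat) : R :=
  Num.min
    (\big[Num.min/ vk n x y d (sigma 1%N) - rad_j n x y d sigma 1%N]_(1 <= j < n)
        (vk n x y d (sigma j) - rad_j n x y d sigma j))
    (vk n x y d (sigma n) - rad_n n x y d sigma).
Definition Bconst (R : realType) (n : nat) (x y d : nat -> R)
  (sigma : nat -> nat) : R :=
  Num.max
    (\big[Num.max/ vk n x y d (sigma 1%N) + rad_j n x y d sigma 1%N]_(1 <= j < n)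
        (vk n x y d (sigma j) + rad_j n x y d sigma j))
    (vk n x y d (sigma n) + rad_n n x y d sigma).

Definition graph_on (R : realType) (a b : R) (f : R -> R) : set (R * R) :=
  [set p | exists2 t, a <= t <= b & p = (t, f t)].

(* attractor of the IFS {f_1,...,f_n}: nonempty compact K with
   K = \bigcup_{k=1}^n f_k(K) (unique by the contraction principle). *)
Definition is_attractor (R : realType) (n : nat) (x y d : nat -> R)
  (K : set (R * R)) : Prop :=
  K !=set0 /\ compact K /\
  K = \bigcup_(k in [set k : nat | (1 <= k <= n)%N]) (fmap n x y d k @` K).

Definition is_affine_FIF (R : realType) (n : nat) (x y d : nat -> R)
  (f : R -> R) : Prop :=
  {within `[x 0%N, x n], continuous f} /\
  (forall k, (k <= n)%N -> f (x k) = y k) /\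
  is_attractor n x y d (graph_on (x 0%N) (x n) f).

From Pilot Require Import Defs.
From HB Require Import structures.
From mathcomp Require Import all_boot all_order all_algebra.
From mathcomp Require Import all_classical all_reals all_analysis.
From mathcomp Require Import ring lra zify.
Set Implicit Arguments. Unset Strict Implicit.
Import Order.TTheory GRing.Theory Num.Theory numFieldNormedType.Exports.
Local Open Scope ring_scope.
Local Open Scope classical_set_scope.

(* Each f_k is a contraction of ratio s_k for rho_theta whose fixed point is
   P_k = (u_k, v_k), and any two fixed points are at distance at most M.
   Let X be the largest distance from a point of f_m(G_f) to P_m, where
   m = sigma(n) has the largest ratio, and Y the largest distance from a
   point of f_l(G_f) to P_l over the other l (both finite as G_f is compact).
   Every point of G_f lies in some f_l(G_f), so applying f_k and going
   through P_l by the triangle inequality gives X <= s_m max(X, Y + M) and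
   Y <= s_{sigma(n-1)} max(X + M, Y + M).  Solving these two inequalities
   bounds rho_theta(p, P_k), hence theta |p.2 - v_k|, on each f_k(G_f). *)

Lemma le_mulr_max_contract (R : realFieldType) (t X Z : R) :
  0 <= t < 1 -> 0 <= X -> 0 <= Z -> X <= t * Num.max X Z -> X <= t * Z.
Proof. by move=> /andP[t0 t1] X0 Z0; case: (leP X Z) => [//|ZX hX]; nra. Qed.

Lemma le_two_contractions (R : realFieldType) (s t M X Y : R) :
  0 <= s <= t -> t < 1 -> 0 <= M -> 0 <= X -> 0 <= Y ->
  X <= t * (Y + M) -> Y <= s * Num.max (X + M) (Y + M) ->
  X * (1 - s * t) <= M * t * (1 + s) /\
  Num.max (X + M) (Y + M) * (1 - s * t) <= M * (1 + t).
Proof.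
move=> /andP[s0 st] t1 M0 X0 Y0 hX.
have t0 : 0 <= t := le_trans s0 st.
have D0 : 0 <= 1 - s * t by nra.
have hXD : X * (1 - s * t) <= t * (Y + M) * (1 - s * t) by exact: ler_wpM2r.
case: (leP (X + M) (Y + M)) => _ hY.
- have YM_t : (Y + M) * (1 - t) <= M by nra.
  have YM_st : (Y + M) * (1 - s * t) <= M * (1 + s) by nra.
  have tYM_st := ler_wpM2l t0 YM_st.
  have Mst : M * s <= M * t by nra.
  by split; nra.
- by split; nra.
Qed.

Section ContractionBounds.
Variables (R : realType) (T : Type) (rho : T -> T -> R).
Hypothesis rho_ge0 : forall p q, 0 <= rho p q.
Hypothesis rho_triangle : forall p q r, rho p r <= rho p q + rho q r.
Variables (I : set nat) (F : nat -> T -> T) (P : nat -> T) (s : nat -> R).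
Hypothesis F_fix : forall k, I k -> F k (P k) = P k.
Hypothesis F_lipschitz :
  forall k p q, I k -> rho (F k p) (F k q) <= s k * rho p q.
Hypothesis s_ge0 : forall k, I k -> 0 <= s k.
Variables (m : nat) (s' M : R) (K : set T).
Hypothesis Im : I m.
Hypothesis sm_lt1 : s m < 1.
Hypothesis s'_ge0 : 0 <= s'.
Hypothesis s'_le_sm : s' <= s m.
Hypothesis s_le_s' : forall k, I k -> k != m -> s k <= s'.
Hypothesis dist_fix_le : forall k l, I k -> I l -> rho (P k) (P l) <= M.
Hypothesis K_self_similar : K = \bigcup_(k in I) F k @` K.
Hypothesis K_bounded : exists C, forall p, K p -> rho p (P m) <= C.

(* Adding 0 makes both sets nonempty, as [ge_sup] requires. *)
Let Xset := [set 0] `|` [set rho (F m q) (P m) | q in K].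
Let Yset := [set 0] `|`
  [set z | exists l q, [/\ I l, l != m, K q & z = rho (F l q) (P l)]].
Let X := sup Xset.
Let Y := sup Yset.

Let M_ge0 : 0 <= M.
Proof. exact: le_trans (rho_ge0 _ _) (dist_fix_le Im Im). Qed.

Let image_in_K l q : I l -> K q -> K (F l q).
Proof. by move=> Il Kq; rewrite K_self_similar; exists l => //; exists q. Qed.

Let image_dist_bounded :
  exists2 C, 0 <= C & forall l q, I l -> K q -> rho (F l q) (P l) <= C.
Proof.
have [C hC] := K_bounded; exists (Num.max 0 (C + M)) => [|l q Il Kq].
  by rewrite le_max lexx.
rewrite le_max; apply/orP; right.
apply: le_trans (rho_triangle _ (P m) _) _.
by apply: lerD; [exact/hC/image_in_K | exact: dist_fix_le].
Qed.

Let Xset_ub : has_ubound Xset.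
Proof.
have [C C0 hC] := image_dist_bounded.
by exists C => _ [-> // | [q Kq <-]]; exact: hC.
Qed.

Let Yset_ub : has_ubound Yset.
Proof.
have [C C0 hC] := image_dist_bounded.
by exists C => _ [-> // | [l [q [Il _ Kq ->]]]]; exact: hC.
Qed.

Let X_ge0 : 0 <= X. Proof. by apply: ub_le_sup Xset_ub _ _; left. Qed.
Let Y_ge0 : 0 <= Y. Proof. by apply: ub_le_sup Yset_ub _ _; left. Qed.

Let le_X q : K q -> rho (F m q) (P m) <= X.
Proof. by move=> Kq; apply: ub_le_sup Xset_ub _ _; right; exists q. Qed.

Let le_Y l q : I l -> l != m -> K q -> rho (F l q) (P l) <= Y.
Proof. by move=> Il lm Kq; apply: ub_le_sup Yset_ub _ _; right; exists l, q. Qed.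

Let dist_K_fix q k : K q -> I k ->
  rho q (P k) <= Num.max (X + M) (Y + M) /\ rho q (P m) <= Num.max X (Y + M).
Proof.
rewrite {1}K_self_similar => -[l Il [q' Kq' <-]] Ik.
have via_Pl j : I j -> rho (F l q') (P j) <= rho (F l q') (P l) + M.
  move=> Ij; apply: le_trans (rho_triangle _ (P l) _) _.
  by rewrite lerD2l dist_fix_le.
have [lm | lm] := eqVneq l m.
  by subst l; rewrite !le_max le_X // (le_trans (via_Pl _ Ik)) ?lerD2r ?le_X.
have YM j : I j -> rho (F l q') (P j) <= Y + M.
  by move=> Ij; rewrite (le_trans (via_Pl _ Ij)) ?lerD2r ?le_Y.
by split; rewrite le_max YM ?orbT.
Qed.

Let dist_image_fix k q : I k -> K q -> rho (F k q) (P k) <= s k * rho q (P k).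
Proof. by move=> Ik Kq; rewrite -{1}(F_fix Ik); exact: F_lipschitz. Qed.

Let X_le : X <= s m * Num.max X (Y + M).
Proof.
have max_ge0 : 0 <= Num.max X (Y + M) by rewrite le_max X_ge0.
apply: ge_sup; first by exists 0; left.
move=> _ [-> | [q Kq <-]]; first exact: mulr_ge0 (s_ge0 Im) max_ge0.
apply: le_trans (dist_image_fix Im Kq) _.
by apply: ler_wpM2l; [exact: s_ge0 | case: (dist_K_fix Kq Im)].
Qed.

Let Y_le : Y <= s' * Num.max (X + M) (Y + M).
Proof.
have max_ge0 : 0 <= Num.max (X + M) (Y + M) by rewrite le_max addr_ge0.
apply: ge_sup; first by exists 0; left.
move=> _ [-> | [l [q [Il lm Kq ->]]]]; first exact: mulr_ge0.
apply: le_trans (dist_image_fix Il Kq) _.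
apply: le_trans (ler_wpM2r max_ge0 (s_le_s' Il lm)).
by apply: ler_wpM2l; [exact: s_ge0 | case: (dist_K_fix Kq Il)].
Qed.

Let XY_bounds :
  X * (1 - s' * s m) <= M * s m * (1 + s') /\
  Num.max (X + M) (Y + M) * (1 - s' * s m) <= M * (1 + s m).
Proof.
apply: le_two_contractions => //; first by rewrite s'_ge0 s'_le_sm.
by apply: le_mulr_max_contract; rewrite ?addr_ge0 ?s_ge0.
Qed.

Let D_ge0 : 0 <= 1 - s' * s m.
Proof. by move: s'_ge0 s'_le_sm sm_lt1 (s_ge0 Im); nra. Qed.

Lemma dist_top_image_fix_le q : K q ->
  rho (F m q) (P m) * (1 - s' * s m) <= M * s m * (1 + s').
Proof. by move=> Kq; exact: le_trans (ler_wpM2r D_ge0 (le_X Kq)) XY_bounds.1. Qed.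

Lemma dist_image_fix_le k q : I k -> K q ->
  rho (F k q) (P k) * (1 - s' * s m) <= M * s k * (1 + s m).
Proof.
move=> Ik Kq; have [to_Pk _] := dist_K_fix Kq Ik.
have sk_ge0 := s_ge0 Ik.
have := le_trans (dist_image_fix Ik Kq) (ler_wpM2l sk_ge0 to_Pk).
move/(ler_wpM2r D_ge0)/le_trans; apply.
have -> : M * s k * (1 + s m) = s k * (M * (1 + s m)) by ring.
by rewrite -mulrA; apply: ler_wpM2l; case: XY_bounds.
Qed.

End ContractionBounds.

Lemma ex_ord_succ (n k : nat) : (1 <= k <= n)%N -> exists i : 'I_n, k = i.+1.
Proof. by case: k => [//|k] /= kn; exists (Ordinal kn). Qed.

Lemma inj_in_iota_onto (n : nat) (g : nat -> nat) :
  (forall j, (1 <= j <= n)%N -> (1 <= g j <= n)%N) ->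
  {in [pred j : nat | (1 <= j <= n)%N] &, injective g} ->
  forall k, (1 <= k <= n)%N -> exists2 j, (1 <= j <= n)%N & g j = k.
Proof.
move=> g_in g_inj k kn.
have memI j : (j \in iota 1 n) = (1 <= j <= n)%N by rewrite mem_iota add1n ltnS.
have g_uniq : uniq (map g (iota 1 n)).
  by rewrite map_inj_in_uniq ?iota_uniq // => i j; rewrite !memI; exact: g_inj.
have g_sub : {subset map g (iota 1 n) <= iota 1 n}.
  by move=> z /mapP[j]; rewrite !memI => /g_in gj ->.
have [_ g_onto] := uniq_min_size g_uniq g_sub (eq_leq (esym (size_map _ _))).
have : k \in map g (iota 1 n) by rewrite g_onto memI.
by case/mapP => j; rewrite memI => jn ->; exists j.
Qed.

Definition rho (R : realType) (th : R) (p q : R * R) : R :=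
  `|p.1 - q.1| + th * `|p.2 - q.2|.

Lemma le_rho_snd (R : realType) (th : R) (p q : R * R) :
  th * `|p.2 - q.2| <= rho th p q.
Proof. by rewrite /rho lerDr. Qed.

Section RhoTheta.
Variables (R : realType) (th : R).
Hypothesis th_ge0 : 0 <= th.

Lemma rho_ge0 (p q : R * R) : 0 <= rho th p q.
Proof. by rewrite /rho addr_ge0 ?mulr_ge0. Qed.

Lemma rho_triangle (p q r : R * R) : rho th p r <= rho th p q + rho th q r.
Proof.
rewrite /rho addrACA lerD ?ler_distD // -mulrDr ler_wpM2l ?ler_distD //.
Qed.

Lemma affine_lipschitz (a b c dk e : R) (p q : R * R) : 0 <= a -> 0 <= dk ->
  rho th (a * p.1 + b, c * p.1 + dk * p.2 + e)
         (a * q.1 + b, c * q.1 + dk * q.2 + e)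
  <= Num.max (a + th * `|c|) dk * rho th p q.
Proof.
move=> a0 dk0; rewrite /rho /=.
have -> : a * p.1 + b - (a * q.1 + b) = a * (p.1 - q.1) by ring.
have -> : c * p.1 + dk * p.2 + e - (c * q.1 + dk * q.2 + e)
          = c * (p.1 - q.1) + dk * (p.2 - q.2) by ring.
set u := p.1 - q.1; set v := p.2 - q.2; set mx := Num.max _ _.
have mx1 : a + th * `|c| <= mx by rewrite le_max lexx.
have mx2 : dk <= mx by rewrite le_max lexx orbT.
have cv : th * `|c * u + dk * v| <= th * (`|c| * `|u| + dk * `|v|).
  by rewrite ler_wpM2l // -{2}(ger0_norm dk0) -!normrM ler_normD.
have u0 := normr_ge0 u; have v0 : 0 <= th * `|v| by rewrite mulr_ge0.
rewrite normrM (ger0_norm a0); nra.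
Qed.

Lemma compact_rho_bounded (K : set (R * R)) (p0 : R * R) :
  compact K -> exists C, forall p, K p -> rho th p p0 <= C.
Proof.
move=> /compact_bounded[r [_ /(_ (r + 1))]]; rewrite ltrDl ltr01 => /(_ isT) Kr.
exists (r + 1 + `|p0.1| + th * (r + 1 + `|p0.2|)) => p /Kr /=.
rewrite prod_normE ge_max => /andP[p1 p2].
rewrite /rho lerD ?ler_wpM2l //; apply: le_trans (ler_normB _ _) _; exact: lerD.
Qed.

End RhoTheta.

Lemma dist_snd_le_of_rho (R : realType) (th D N : R) (p q : R * R) :
  0 < th -> 0 < D -> rho th p q * D <= N -> `|p.2 - q.2| <= N / (th * D).
Proof.
move=> th0 D0 pqN; rewrite ler_pdivlMr ?mulr_gt0 // mulrA (mulrC _ th).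
exact: le_trans (ler_wpM2r (ltW D0) (le_rho_snd _ _ _)) pqN.
Qed.

Definition Pk (R : realType) (n : nat) (x y d : nat -> R) (k : nat) : R * R :=
  (uk n x k, vk n x y d k).

Lemma Aconst_Bconst_rad_j (R : realType) (n : nat) (x y d : nat -> R)
    (sigma : nat -> nat) (j : nat) : (1 <= j < n)%N ->
  Aconst n x y d sigma <= vk n x y d (sigma j) - rad_j n x y d sigma j /\
  vk n x y d (sigma j) + rad_j n x y d sigma j <= Bconst n x y d sigma.
Proof.
move=> jn; have j_in : j \in index_iota 1 n by rewrite mem_index_iota.
split; first by rewrite ge_min ge_bigmin_seq.
rewrite le_max; apply/orP; left.
by apply: (@le_bigmax_seq _ _ _ _ _ j _
  (fun i => vk n x y d (sigma i) + rad_j n x y d sigma i) j_in).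
Qed.

Lemma Aconst_Bconst_rad_n (R : realType) (n : nat) (x y d : nat -> R)
    (sigma : nat -> nat) :
  Aconst n x y d sigma <= vk n x y d (sigma n) - rad_n n x y d sigma /\
  vk n x y d (sigma n) + rad_n n x y d sigma <= Bconst n x y d sigma.
Proof. by rewrite ge_min le_max !lexx !orbT. Qed.

Section InterpolationData.
Variables (R : realType) (n : nat) (x y d : nat -> R).
Hypothesis n_ge2 : (2 <= n)%N.
Hypothesis x_lt : forall k, (k < n)%N -> x k < x k.+1.
Hypothesis d_ge0_lt1 : forall k, (1 <= k <= n)%N -> 0 <= d k < 1.

Let x_convex :
  {in [pred i | i <= n]%N &, forall i j k, (i < k < j)%N -> (k <= n)%N}.
Proof. by move=> i j _ jn k /andP[_ kj]; exact: ltnW (leq_trans kj jn). Qed.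

Let x_lt_in : {in [pred i | i <= n]%N, forall i, (i.+1 <= n)%N -> x i < x i.+1}.
Proof. by move=> i _; exact: x_lt. Qed.

Let ltr_x i j : (i <= n)%N -> (j <= n)%N -> (i < j)%N -> x i < x j.
Proof. exact: homo_ltn_in lt_trans x_convex x_lt_in i j. Qed.

Let ler_x i j : (i <= n)%N -> (j <= n)%N -> (i <= j)%N -> x i <= x j.
Proof.
by move=> i_n j_n; rewrite leq_eqVlt => /predU1P[-> // | ij]; exact/ltW/ltr_x.
Qed.

Let x0_lt_xn : x 0 < x n.
Proof. by apply: ltr_x; lia. Qed.

Lemma ak_ge0 k : (1 <= k <= n)%N -> 0 <= ak n x k.
Proof.
move=> kn; apply: divr_ge0; last by rewrite subr_ge0 ltW.
by rewrite subr_ge0; apply: ler_x; lia.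
Qed.

Lemma ak_lt1 k : (1 <= k <= n)%N -> ak n x k < 1.
Proof.
move=> kn; rewrite /ak ltr_pdivrMr ?subr_gt0 // mul1r.
have xk : x k <= x n by apply: ler_x; lia.
have [k1 | k_gt1] := leqP k 1.
  have -> : k = 1%N by lia.
  have : x 1 < x n by apply: ltr_x; lia.
  by rewrite /=; lra.
have : x 0 < x k.-1 by apply: ltr_x; lia.
lra.
Qed.

Let amax := \big[Num.max/ak n x 1]_(k < n) ak n x k.+1.
Let cmax := \big[Num.max/0]_(k < n) `|ck n x y d k.+1|.

Let amax_lt1 : amax < 1.
Proof.
by apply: bigmax_lt => [|i _]; apply: ak_lt1; rewrite ?ltn_ord //; lia.
Qed.

Let ak_le_amax k : (1 <= k <= n)%N -> ak n x k <= amax.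
Proof. by case/ex_ord_succ => i ->; exact: le_bigmax. Qed.

Let ck_le_cmax k : (1 <= k <= n)%N -> `|ck n x y d k| <= cmax.
Proof. by case/ex_ord_succ => i ->; exact: le_bigmax. Qed.

Lemma theta_gt0 : 0 < theta n x y d.
Proof.
rewrite /theta -/amax -/cmax; case: ifP => // /negbT/forallPn[i ci].
rewrite divr_gt0 ?subr_gt0 // mulr_gt0 //.
by apply: lt_le_trans (le_bigmax _ _ i); rewrite normr_gt0.
Qed.

Lemma ak_theta_ck_lt1 k : (1 <= k <= n)%N ->
  ak n x k + theta n x y d * `|ck n x y d k| < 1.
Proof.
move=> kn; move: theta_gt0; rewrite /theta -/amax -/cmax.
case: ifP => [/forallP c0 _ | _ th_gt0].
  have [i k_eq] := ex_ord_succ kn.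
  by rewrite k_eq (eqP (c0 i)) normr0 mulr0 addr0 -k_eq ak_lt1.
have cmax_gt0 : 0 < cmax.
  by move: th_gt0; rewrite pmulr_rgt0 ?subr_gt0 // invr_gt0 pmulr_rgt0.
have := ler_wpM2l (ltW th_gt0) (ck_le_cmax kn).
have -> : (1 - amax) / (2 * cmax) * cmax = (1 - amax) / 2.
  by field; rewrite gt_eqF.
by move: amax_lt1 (ak_le_amax kn); lra.
Qed.

Lemma sk_ge0 k : (1 <= k <= n)%N -> 0 <= sk n x y d k.
Proof. by move=> /d_ge0_lt1/andP[d0 _]; rewrite /sk le_max d0 orbT. Qed.

Lemma sk_lt1 k : (1 <= k <= n)%N -> sk n x y d k < 1.
Proof.
move=> kn; have /andP[_ d1] := d_ge0_lt1 kn.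
by rewrite /sk gt_max ak_theta_ck_lt1.
Qed.

Lemma fmap_Pk k : (1 <= k <= n)%N ->
  Defs.fmap n x y d k (Pk n x y d k) = Pk n x y d k.
Proof.
move=> kn; have /andP[_ d1] := d_ge0_lt1 kn.
have a1 : 1 - ak n x k != 0 by rewrite subr_eq0 eq_sym lt_eqF ?ak_lt1.
have {}d1 : 1 - d k != 0 by rewrite subr_eq0 eq_sym lt_eqF.
by rewrite /Defs.fmap /Pk /uk /vk /=; congr pair; field; rewrite ?a1 ?d1.
Qed.

Lemma fmap_lipschitz k p q : (1 <= k <= n)%N ->
  rho (theta n x y d) (Defs.fmap n x y d k p) (Defs.fmap n x y d k q)
  <= sk n x y d k * rho (theta n x y d) p q.
Proof.
move=> kn; have /andP[d0 _] := d_ge0_lt1 kn.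
by apply: affine_lipschitz => //; [exact: ltW theta_gt0 | exact: ak_ge0].
Qed.

Lemma rho_Pk_le_Mconst k l : (1 <= k <= n)%N -> (1 <= l <= n)%N ->
  rho (theta n x y d) (Pk n x y d k) (Pk n x y d l) <= Mconst n x y d.
Proof.
case/ex_ord_succ => i -> /ex_ord_succ[j ->].
apply: le_trans (le_bigmax _ _ i).
exact: (le_bigmax _ (fun j : 'I_n => _) j).
Qed.

Section Attractor.
Variables (sigma : nat -> nat) (K : set (R * R)).
Hypothesis sigma_in : forall j, (1 <= j <= n)%N -> (1 <= sigma j <= n)%N.
Hypothesis sigma_inj : {in [pred j : nat | (1 <= j <= n)%N] &, injective sigma}.
Hypothesis sigma_sorted : forall i j, (1 <= i <= j)%N -> (j <= n)%N ->
  sk n x y d (sigma i) <= sk n x y d (sigma j).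
Hypothesis K_compact : compact K.
Hypothesis K_self_similar :
  K = \bigcup_(k in [set k : nat | (1 <= k <= n)%N]) (Defs.fmap n x y d k @` K).

Let theta_ge0 : 0 <= theta n x y d := ltW theta_gt0.

Let sigma_n_in : (1 <= sigma n <= n)%N.
Proof. by apply: sigma_in; lia. Qed.

Let sigma_pred_in : (1 <= sigma n.-1 <= n)%N.
Proof. by apply: sigma_in; lia. Qed.

Let sk_pred_le : sk n x y d (sigma n.-1) <= sk n x y d (sigma n).
Proof. by apply: sigma_sorted; lia. Qed.

Let sk_le_pred k : (1 <= k <= n)%N -> k != sigma n ->
  sk n x y d k <= sk n x y d (sigma n.-1).
Proof.
move=> kn; have [j jn <-] := inj_in_iota_onto sigma_in sigma_inj kn.
move=> sigma_j_ne; have j_ne : j != n.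
  by move: sigma_j_ne; apply: contra_neq => ->.
by apply: sigma_sorted; lia.
Qed.

Lemma Dconst_gt0 : 0 < Dconst n x y d sigma.
Proof.
rewrite /Dconst subr_gt0.
move: (sk_ge0 sigma_pred_in) (sk_lt1 sigma_pred_in).
by move: (sk_ge0 sigma_n_in) (sk_lt1 sigma_n_in); nra.
Qed.

Let K_bounded := compact_rho_bounded theta_ge0 (Pk n x y d (sigma n)) K_compact.

Lemma dist_graph_top_Pk q : K q ->
  rho (theta n x y d) (Defs.fmap n x y d (sigma n) q) (Pk n x y d (sigma n))
    * Dconst n x y d sigma
  <= Mconst n x y d * sk n x y d (sigma n) * (1 + sk n x y d (sigma n.-1)).
Proof.
exact: (dist_top_image_fix_le (rho_ge0 theta_ge0) (rho_triangle theta_ge0)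
  fmap_Pk fmap_lipschitz sk_ge0 sigma_n_in (sk_lt1 sigma_n_in)
  (sk_ge0 sigma_pred_in) sk_pred_le sk_le_pred rho_Pk_le_Mconst
  K_self_similar K_bounded).
Qed.

Lemma dist_graph_Pk k q : (1 <= k <= n)%N -> K q ->
  rho (theta n x y d) (Defs.fmap n x y d k q) (Pk n x y d k)
    * Dconst n x y d sigma
  <= Mconst n x y d * sk n x y d k * (1 + sk n x y d (sigma n)).
Proof.
exact: (dist_image_fix_le (rho_ge0 theta_ge0) (rho_triangle theta_ge0)
  fmap_Pk fmap_lipschitz sk_ge0 sigma_n_in (sk_lt1 sigma_n_in)
  (sk_ge0 sigma_pred_in) sk_pred_le sk_le_pred rho_Pk_le_Mconst
  K_self_similar K_bounded).
Qed.

Lemma graph_snd_bounds p : K p ->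
  Aconst n x y d sigma <= p.2 <= Bconst n x y d sigma.
Proof.
rewrite {1}K_self_similar => -[k kn [q Kq <-]].
have [j jn <-] := inj_in_iota_onto sigma_in sigma_inj kn.
set v := vk n x y d (sigma j); set z := (Defs.fmap n x y d (sigma j) q).2.
have within r : `|z - v| <= r ->
    Aconst n x y d sigma <= v - r /\ v + r <= Bconst n x y d sigma ->
    Aconst n x y d sigma <= z <= Bconst n x y d sigma.
  rewrite ler_distl => /andP[lo hi] [A_le B_ge].
  by rewrite (le_trans A_le lo) (le_trans hi B_ge).
have [jn_eq | j_ne] := eqVneq j n.
  subst j; apply: within (Aconst_Bconst_rad_n _ _ _ _ _).
  exact: dist_snd_le_of_rho theta_gt0 Dconst_gt0 (dist_graph_top_Pk Kq).
apply: within (Aconst_Bconst_rad_j _ _ _ _ _); last by lia.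
exact: dist_snd_le_of_rho theta_gt0 Dconst_gt0 (dist_graph_Pk (sigma_in jn) Kq).
Qed.

End Attractor.
End InterpolationData.

Theorem corollary3p1 (R : realType) (n : nat) (x y d : nat -> R)
  (sigma : nat -> nat) (f : R -> R) :
  (2 <= n)%N ->
  (forall k, (k < n)%N -> x k < x k.+1) ->
  (forall k, (1 <= k <= n)%N -> 0 <= d k < 1) ->
  (forall j, (1 <= j <= n)%N -> (1 <= sigma j <= n)%N) ->
  {in [pred j : nat | (1 <= j <= n)%N] &, injective sigma} ->
  (forall i j, (1 <= i <= j)%N -> (j <= n)%N ->
     sk n x y d (sigma i) <= sk n x y d (sigma j)) ->
  is_affine_FIF n x y d f ->
  graph_on (x 0%N) (x n) f `<=`
    [set p | x 0%N <= p.1 <= x n /\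
             Aconst n x y d sigma <= p.2 <= Bconst n x y d sigma].
Proof.
move=> n_ge2 x_lt d01 sigma_in sigma_inj sigma_sorted.
move=> [_ [_ [_ [G_compact G_ss]]]] p Gp; split; first by case: Gp => t t_in ->.
exact: (graph_snd_bounds n_ge2 x_lt d01 sigma_in sigma_inj sigma_sorted
  G_compact G_ss Gp).
Qed.
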